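(* Let $R$ be a commutative ring with identity. The following are equivalent: (1) $R[X]_A$ is a residually principal ideal ring; (2) $R[X]_A$ is a residually valuation ring; (3) $R[X]_A$ is a residually Bézout ring; (4) $R[X]_A$ is a residually Prüfer ring; (5) $R$ is zero-dimensional (i.e., has Krull dimension $0$).
   Context: $X$ is an indeterminate over $R$, $A=\{f\in R[X]\mid f(0)=1\}$, and $R[X]_A$ is the localization of $R[X]$ at $A$. For a property (P) of integral domains, a ring $T$ is called residually (P) if $T/\mathfrak p$ has property (P) for every prime ideal $\mathfrak p$ of $T$. Thus ''residually principal ideal ring'' means $T/\mathfrak p$ is a principal ideal domain for all primes $\mathfrak p$, and similarly for valuation domains, Bézout domains (every finitely generated ideal principal) and Prüfer domains (every nonzero finitely generated ideal invertible). *)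

From HB Require Import structures.
From mathcomp Require Import all_boot all_order all_algebra.
Set Implicit Arguments.
Unset Strict Implicit.
Unset Printing Implicit Defensive.
Import GRing.Theory.
Local Open Scope ring_scope.

Section Ideals.
Variable T : comNzRingType.

Definition is_ideal (I : T -> Prop) : Prop :=
  [/\ I 0, (forall x y, I x -> I y -> I (x + y)) & (forall a x, I x -> I (a * x))].

Definition prime_ideal (I : T -> Prop) : Prop :=
  [/\ is_ideal I, ~ I 1 & forall x y, I (x * y) -> I x \/ I y].

Definition strict_incl (I J : T -> Prop) : Prop :=
  (forall x, I x -> J x) /\ exists x, J x /\ ~ I x.

Definition gen_by (n : nat) (s : 'I_n -> T) (x : T) : Prop :=
  exists c : 'I_n -> T, x = \sum_(i < n) c i * s i.

Definition principal_ideal (I : T -> Prop) : Prop :=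
  exists a : T, forall x, I x <-> exists r, x = r * a.

Definition fg_ideal (I : T -> Prop) : Prop :=
  exists n (s : 'I_n -> T), forall x, I x <-> gen_by s x.

Definition ideal_mul (I J : T -> Prop) (x : T) : Prop :=
  exists n (a b : 'I_n -> T),
    (forall i, I (a i) /\ J (b i)) /\ x = \sum_(i < n) a i * b i.

Definition pideal (d : T) (x : T) : Prop := exists r, x = r * d.

Definition is_domain : Prop := forall x y : T, x * y = 0 -> x = 0 \/ y = 0.

(* An ideal I of a domain is invertible iff I * d^-1 J = T for some
   (integral) ideal J and nonzero d, i.e. some fractional ideal d^-1 J. *)
Definition invertible_ideal (I : T -> Prop) : Prop :=
  exists (J : T -> Prop) (d : T),
    is_ideal J /\ d != 0 /\ forall x, ideal_mul I J x <-> pideal d x.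

Definition zero_dimensional : Prop :=
  (exists p, prime_ideal p) /\
  ~ (exists p q, prime_ideal p /\ prime_ideal q /\ strict_incl p q).

End Ideals.

Definition PID (D : comNzRingType) : Prop :=
  is_domain D /\ forall I : D -> Prop, is_ideal I -> principal_ideal I.

Definition valuation_domain (D : comNzRingType) : Prop :=
  is_domain D /\ forall a b : D, (exists r, b = r * a) \/ (exists r, a = r * b).

Definition bezout_domain (D : comNzRingType) : Prop :=
  is_domain D /\
  forall I : D -> Prop, is_ideal I -> fg_ideal I -> principal_ideal I.

Definition prufer_domain (D : comNzRingType) : Prop :=
  is_domain D /\
  forall I : D -> Prop, is_ideal I -> fg_ideal I -> (exists x, I x /\ x != 0) ->
    invertible_ideal I.

(* T is residually P: T/p has P for every prime p. T/p is represented by any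
   surjective ring morphism out of T with kernel exactly p (the quotient is
   unique up to isomorphism and all properties above are iso-invariant). *)
Definition residually (P : comNzRingType -> Prop) (T : comNzRingType) : Prop :=
  forall p : T -> Prop, prime_ideal p ->
  forall (D : comNzRingType) (pi : {rmorphism T -> D}),
    (forall d : D, exists t, pi t = d) ->
    (forall t, pi t = 0 <-> p t) ->
    P D.

(* A = {f in R[X] | f(0) = 1};  phi : R[X] -> S exhibits S as R[X]_A. *)
Definition in_A (R : comNzRingType) (f : {poly R}) : Prop := f.[0] = 1.

Definition is_localization_A (R : comNzRingType) (S : comNzRingType)
    (phi : {rmorphism {poly R} -> S}) : Prop :=
  [/\ (forall a, in_A a -> exists y, phi a * y = 1),
      (forall s : S, exists f a, in_A a /\ s * phi a = phi f) &
      (forall f, phi f = 0 -> exists a, in_A a /\ a * f = 0)].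

(* If R is zero-dimensional, let D be a residue domain of R[X]_A and x the image of X.
   The kernel of R -> D is a prime, hence maximal, ideal, so the image of a constant c
   is 0 or a unit; when it is a unit, say s c = 1 in D, the polynomial gX + c becomes a
   unit too, as s (gX + c) + (1 - s c) lies in A. By induction every nonzero element of
   D is x^n times a unit, whence D is a PID and a valuation domain.
   Conversely, given primes p < q of R and a in q \ p, the localized extension of p[X]
   is a prime of R[X]_A whose residue domain is not Prufer: if (a, X) were invertible,
   there would be al + be = 1, X al = a ga and a be = X de in it, and reading these
   relations on the coefficients of degree 0 and 1 modulo p puts 1 in q. *)

From HB Require Import structures.
From mathcomp Require Import all_boot all_order all_algebra.
From mathcomp Require Import boolp classical_sets.
From mathcomp Require Import ring.
Set Implicit Arguments.
Unset Strict Implicit.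
Unset Printing Implicit Defensive.
Import GRing.Theory.
Local Open Scope ring_scope.

Section Ideals.
Variable T : comNzRingType.
Implicit Types (I J : T -> Prop) (x y : T).

Lemma ideal_sum I n (F : 'I_n -> T) :
  is_ideal I -> (forall i, I (F i)) -> I (\sum_(i < n) F i).
Proof. by case=> I0 ID _ IF; elim/big_ind: _ => // i _; apply: IF. Qed.

Lemma ideal_mulr I x a : is_ideal I -> I x -> I (x * a).
Proof. by case=> _ _ IM Ix; rewrite mulrC; apply: IM. Qed.

Lemma ideal_sub I x y : is_ideal I -> I x -> I y -> I (x - y).
Proof.
by case=> _ ID IM Ix Iy; apply: ID => //; rewrite -mulN1r; apply: IM.
Qed.

Definition ideal_adjoin J x z := exists a r, J a /\ z = a + r * x.

Lemma ideal_adjoin_ideal J x : is_ideal J -> is_ideal (ideal_adjoin J x).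
Proof.
case=> J0 JD JM; split.
- by exists 0, 0; rewrite mul0r addr0.
- move=> _ _ [a [r [Ja ->]]] [b [s [Jb ->]]].
  by exists (a + b), (r + s); split; [apply: JD | rewrite mulrDl addrACA].
- move=> c _ [a [r [Ja ->]]].
  by exists (c * a), (c * r); split; [apply: JM | rewrite mulrDr mulrA].
Qed.

Lemma ideal_adjoinW J x y : J y -> ideal_adjoin J x y.
Proof. by move=> Jy; exists y, 0; rewrite mul0r addr0. Qed.

Lemma ideal_adjoin_elt J x : is_ideal J -> ideal_adjoin J x x.
Proof. by case=> J0 _ _; exists 0, 1; rewrite mul1r add0r. Qed.

Definition proper_ideal_over I J : Prop :=
  [/\ is_ideal J, ~ J 1 & forall x, I x -> J x].

Lemma proper_ideal_over_bigcup I (F : set (set T)) J0 x0 :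
  (forall J x, F J -> J x -> proper_ideal_over I J) -> total_on F subset ->
  F J0 -> J0 x0 -> proper_ideal_over I (\bigcup_(J in F) J)%classic.
Proof.
move=> FP Ftot FJ0 J0x0; have [[J00 _ _] _ IJ0] := FP _ _ FJ0 J0x0.
split; [split| |].
- by exists J0.
- move=> x y [X FX Xx] [Y FY Yy].
  have [XY|YX] := Ftot _ _ FX FY.
  + have [[_ YD _] _ _] := FP _ _ FY Yy.
    by exists Y => //; apply: YD => //; apply: XY.
  + have [[_ XD _] _ _] := FP _ _ FX Xx.
    by exists X => //; apply: XD => //; apply: YX.
- move=> a x [X FX Xx]; have [[_ _ XM] _ _] := FP _ _ FX Xx.
  by exists X => //; apply: XM.
- by move=> [X FX X1]; have [_ + _] := FP _ _ FX X1.
- by move=> x Ix; exists J0 => //; apply: IJ0.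
Qed.

Lemma maximal_proper_ideal_prime I M : proper_ideal_over I M ->
  (forall J, (M `<` J)%classic -> ~ proper_ideal_over I J) -> prime_ideal M.
Proof.
move=> [hM nM1 IM] Mmax; split => // x y Mxy; apply: contrapT => /not_orP[nMx nMy].
have comax z : ~ M z -> exists a r, M a /\ 1 = a + r * z.
  move=> nMz; apply: contrapT => nM1z; apply: (Mmax (ideal_adjoin M z)).
    split; first by move=> w; apply: ideal_adjoinW.
    by move=> /(_ z (ideal_adjoin_elt z hM)).
  split; [exact: ideal_adjoin_ideal | | by move=> w /IM; apply: ideal_adjoinW].
  by move=> [a [r [Ma E]]]; apply: nM1z; exists a, r.
have [a [r [Ma Ea]]] := comax _ nMx; have [b [s [Mb Eb]]] := comax _ nMy.
have [M0 MD MM] := hM.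
apply: nM1; rewrite -(mulr1 1) {1}Ea Eb mulrDl !mulrDr.
apply: (MD); apply: (MD); try by apply: (MM).
- by rewrite mulrC; apply: (MM).
- by rewrite mulrACA; apply: (MM).
Qed.

Lemma exists_prime_over I : is_ideal I -> ~ I 1 ->
  exists p, prime_ideal p /\ forall x, I x -> p x.
Proof.
move=> hI nI1.
(* [set0] must be allowed: it is the union of the empty chain. *)
pose P J := J = set0 \/ proper_ideal_over I J.
have properP J x : P J -> J x -> proper_ideal_over I J by case=> [->|].
have chainP F : (F `<=` P)%classic -> total_on F subset ->
    P (\bigcup_(J in F) J)%classic.
  move=> FP Ftot.
  have [[J0 [FJ0 [x0 J0x0]]]|nF] := pselect (exists J, F J /\ exists x, J x).
    right; apply: (proper_ideal_over_bigcup _ Ftot FJ0 J0x0) => J x FJ.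
    exact/properP/FP.
  left; rewrite predeqE => x; split => //= -[J FJ Jx].
  by apply: nF; exists J; split => //; exists x.
have [M [PM Mmax]] := Zorn_bigcup chainP.
have [M0|overM] := PM.
  exfalso; apply: (Mmax I); last by right.
  by rewrite M0; split => // /(_ 0); case: hI => I0 _ _ /(_ I0).
exists M; split; last by case: overM.
by apply: (maximal_proper_ideal_prime overM) => J MJ overJ; apply: (Mmax J MJ); right.
Qed.

Lemma gen_by_ideal n (s : 'I_n -> T) : is_ideal (gen_by s).
Proof.
split.
- by exists (fun _ => 0); rewrite big1 // => i _; rewrite mul0r.
- move=> _ _ [c ->] [c' ->]; exists (fun i => c i + c' i).
  by rewrite -big_split /=; apply: eq_bigr => i _; rewrite mulrDl.
- move=> a _ [c ->]; exists (fun i => a * c i).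
  by rewrite mulr_sumr; apply: eq_bigr => i _; rewrite mulrA.
Qed.

Lemma gen_by_gen n (s : 'I_n -> T) i : gen_by s (s i).
Proof.
exists (fun j => (j == i)%:R); rewrite (bigD1 i) //= eqxx mul1r big1 ?addr0 //.
by move=> j /negPf ->; rewrite mul0r.
Qed.

Lemma pideal_ideal (d : T) : is_ideal (pideal d).
Proof.
split.
- by exists 0; rewrite mul0r.
- by move=> _ _ [r ->] [s ->]; exists (r + s); rewrite mulrDl.
- by move=> a _ [r ->]; exists (a * r); rewrite mulrA.
Qed.

Lemma zero_dimensional_comaximal (p : T -> Prop) r :
  zero_dimensional T -> prime_ideal p -> ~ p r -> exists t, p (1 - t * r).
Proof.
move=> [_ no_chain] pP npr; have [hp _ _] := pP.
have [[a [t [pa E]]]|n1] := pselect (ideal_adjoin p r 1).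
  by exists t; rewrite E addrK.
have [q [qP pr_q]] := exists_prime_over (ideal_adjoin_ideal r hp) n1.
exfalso; apply: no_chain; exists p, q; split; [exact: pP | split; [exact: qP|]].
split; first by move=> x /(ideal_adjoinW r) /pr_q.
by exists r; split => //; apply/pr_q/ideal_adjoin_elt.
Qed.

Section Residues.
Variables (D : comNzRingType) (pi : {rmorphism T -> D}).

Lemma kernel_prime : is_domain D -> prime_ideal (fun t => pi t = 0).
Proof.
move=> hD; split; [split| |].
- exact: rmorph0.
- by move=> x y px py; rewrite rmorphD px py addr0.
- by move=> a x px; rewrite rmorphM px mulr0.
- by rewrite rmorph1; apply/eqP; exact: oner_neq0.
- by move=> x y; rewrite rmorphM => /hD.
Qed.

Lemma residue_domain p : prime_ideal p -> (forall d, exists t, pi t = d) ->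
  (forall t, pi t = 0 <-> p t) -> is_domain D.
Proof.
move=> [_ _ pP] pi_surj pi_ker d e.
have [s <-] := pi_surj d; have [t <-] := pi_surj e.
by rewrite -rmorphM => /pi_ker/pP[/pi_ker|/pi_ker]; [left|right].
Qed.

End Residues.
End Ideals.

Local Open Scope quotient_scope.

Section Quotient.
Variables (T : comNzRingType) (P : T -> Prop) (hP : is_ideal P) (nP1 : ~ P 1).

Definition ideal_pred : {pred T} := fun x => `[< P x >].

Lemma ideal_pred_closed : idealr_closed ideal_pred.
Proof.
case: hP => P0 PD PM; split.
- exact/asboolP.
- by apply/negP => /asboolP.
- by move=> a u v /asboolP Pu /asboolP Pv; apply/asboolP/PD => //; apply: PM.
Qed.

HB.instance Definition _ := isIdealr.Build T ideal_pred ideal_pred_closed.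

Definition quot_ring := {ideal_quot ideal_pred}.

Definition quot_pi : {rmorphism T -> quot_ring} := \pi_quot_ring.

Lemma quot_pi_surj (d : quot_ring) : exists t, quot_pi t = d.
Proof. by exists (repr d); rewrite /quot_pi /= reprK. Qed.

Lemma quot_pi_ker t : quot_pi t = 0 <-> P t.
Proof.
rewrite /quot_pi /= -[0 : quot_ring](rmorph0 \pi_quot_ring).
split; first by move=> /eqP; rewrite -Quotient.idealrBE subr0 => /asboolP.
by move=> Pt; apply/eqP; rewrite -Quotient.idealrBE subr0; apply/asboolP.
Qed.

End Quotient.

Lemma PID_bezout (D : comNzRingType) : PID D -> bezout_domain D.
Proof. by case=> hD hP; split => // I hI _; apply: hP. Qed.

Lemma valuation_gen_by_principal (D : comNzRingType) :
    (forall a b : D, (exists r, b = r * a) \/ (exists r, a = r * b)) ->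
  forall n (s : 'I_n -> D), exists g, gen_by s g /\ forall i, pideal g (s i).
Proof.
move=> hv; elim=> [|n IH] s.
  by exists 0; split; [exists (fun _ => 0); rewrite big_ord0 | case].
have [g' [[c' Eg'] hs']] := IH (fun i => s (lift ord0 i)).
have [[r Eg]|[r Es0]] := hv (s ord0) g'.
- exists (s ord0); split; first exact: gen_by_gen.
  move=> i; case: (unliftP ord0 i) => [j ->|->]; last by exists 1; rewrite mul1r.
  by have [rj ->] := hs' j; rewrite Eg mulrA; exists (rj * r).
- exists g'; split.
    exists (fun i => if unlift ord0 i is Some j then c' j else 0).
    rewrite big_ord_recl unlift_none mul0r add0r Eg'.
    by apply: eq_bigr => j _; rewrite liftK.
  by move=> i; case: (unliftP ord0 i) => [j ->|->]; [exact: hs' | exists r].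
Qed.

Lemma valuation_bezout (D : comNzRingType) : valuation_domain D -> bezout_domain D.
Proof.
case=> hD hv; split => // I hI [n [s Is]].
have [g [sg gs]] := valuation_gen_by_principal hv s.
exists g => x; rewrite Is; split.
- move=> [c ->]; apply: (ideal_sum (pideal_ideal g)) => i.
  by have [r ->] := gs i; exists (c i * r); rewrite mulrA.
- by move=> [r ->]; case: (gen_by_ideal s) => _ _; apply.
Qed.

Lemma bezout_prufer (D : comNzRingType) : bezout_domain D -> prufer_domain D.
Proof.
case=> hD hB; split => // I hI Ifg [x [Ix x0]].
have [a Ia] := hB I hI Ifg.
have a0 : a != 0.
  by apply: contra_neq x0 => a0; have [r ->] := (Ia x).1 Ix; rewrite a0 mulr0.
exists (fun _ => True), a; split; first by [].
split => // y; split.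
- move=> [n [u [v [uv ->]]]]; apply: (ideal_sum (pideal_ideal a)) => i.
  by apply: (ideal_mulr _ (pideal_ideal a)); apply/Ia; case: (uv i).
- move=> [r ->]; exists 1%N, (fun _ => a), (fun _ => r); split; last first.
    by rewrite big_ord1 mulrC.
  by move=> i; split => //; apply/Ia; exists 1; rewrite mul1r.
Qed.

Section InvertiblePair.
Variables (D : comNzRingType) (a x : D).

Definition pair_ideal := gen_by (fun i : 'I_2 => [:: a; x]`_i).

Lemma pair_idealP z : pair_ideal z <-> exists r t, z = r * a + t * x.
Proof.
split=> [[c ->]|[r [t ->]]].
  by exists (c ord0), (c (lift ord0 ord0)); rewrite !big_ord_recl big_ord0 addr0.
by exists (fun i : 'I_2 => [:: r; t]`_i); rewrite !big_ord_recl big_ord0 addr0.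
Qed.

Lemma ideal_mul_pair (J : D -> Prop) z : is_ideal J ->
  ideal_mul pair_ideal J z -> exists u v, [/\ J u, J v & z = a * u + x * v].
Proof.
move=> [J0 JD JM] [n [s [t [st ->]]]].
pose U w := exists u v, [/\ J u, J v & w = a * u + x * v].
have hU : is_ideal U.
  split; first by exists 0, 0; rewrite !mulr0 addr0.
    move=> _ _ [u [v [Ju Jv ->]]] [u' [v' [Ju' Jv' ->]]].
    by exists (u + u'), (v + v'); split; [exact: JD | exact: JD | ring].
  move=> c _ [u [v [Ju Jv ->]]].
  by exists (c * u), (c * v); split; [exact: JM | exact: JM | ring].
apply: (ideal_sum hU) => i; have [/pair_idealP[r [r' ->]] Jti] := st i.
by exists (r * t i), (r' * t i); split; [exact: JM | exact: JM | ring].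
Qed.

Lemma domain_mulIr (y z d : D) : is_domain D -> d != 0 -> y * d = z * d -> y = z.
Proof.
move=> hD d0 E; have : (y - z) * d = 0 by rewrite mulrBl E subrr.
by case/hD => [/eqP|/eqP]; [rewrite subr_eq0 => /eqP | rewrite (negPf d0)].
Qed.

(* With [d = a u + x v] for [u, v] in [J], the four witnesses are the
   quotients of [a u], [x v], [x u] and [a v] by [d]. *)
Lemma invertible_pair_ideal : is_domain D -> invertible_ideal pair_ideal ->
  exists al be ga de, [/\ al + be = 1, x * al = a * ga & a * be = x * de].
Proof.
move=> hD [J [d [hJ [d0 IJd]]]].
have [u [v [Ju Jv Ed]]] : exists u v, [/\ J u, J v & d = a * u + x * v].
  by apply: ideal_mul_pair => //; apply/IJd; exists 1; rewrite mul1r.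
have IJ y z : pair_ideal y -> J z -> exists r, y * z = r * d.
  move=> Iy Jz; apply/IJd; exists 1%N, (fun _ => y), (fun _ => z).
  by rewrite big_ord1.
have Ia : pair_ideal a by apply/pair_idealP; exists 1, 0; rewrite mul1r mul0r addr0.
have Ix : pair_ideal x by apply/pair_idealP; exists 0, 1; rewrite mul1r mul0r add0r.
have [[al Eal] [be Ebe]] := (IJ _ _ Ia Ju, IJ _ _ Ix Jv).
have [[ga Ega] [de Ede]] := (IJ _ _ Ix Ju, IJ _ _ Ia Jv).
exists al, be, ga, de; split; apply: (domain_mulIr hD d0).
- by rewrite mulrDl -Eal -Ebe mul1r Ed.
- by rewrite -!mulrA -Eal -Ega mulrCA.
- by rewrite -!mulrA -Ebe -Ede mulrCA.
Qed.

End InvertiblePair.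

Lemma residually_impl (P Q : comNzRingType -> Prop) (T : comNzRingType) :
  (forall D, P D -> Q D) -> residually P T -> residually Q T.
Proof. by move=> PQ hP p pP D pi pi_surj pi_ker; apply/PQ/(hP p pP D pi). Qed.

Section MonomialUnits.
Variables (D : comNzRingType) (x : D).

Definition monomial_unit (d : D) := exists n u v, u * v = 1 /\ d = x ^+ n * u.

Lemma monomial_unit_dvd m n u v w : u * v = 1 -> (m <= n)%N ->
  x ^+ n * w = (x ^+ (n - m) * w * v) * (x ^+ m * u).
Proof.
move=> uv mn; rewrite -{1}(subnK mn) exprD.
by transitivity (x ^+ (n - m) * x ^+ m * w * (u * v)); [rewrite uv mulr1 | ring].
Qed.

Hypothesis (hD : is_domain D) (monomial_unitP : forall d, d = 0 \/ monomial_unit d).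

Lemma monomial_unit_valuation : valuation_domain D.
Proof.
split => // a b.
have [->|[m [u [v [uv ->]]]]] := monomial_unitP a; first by right; exists 0; rewrite mul0r.
have [->|[n [w [z [wz ->]]]]] := monomial_unitP b; first by left; exists 0; rewrite mul0r.
have [mn|/ltnW nm] := leqP m n.
  by left; exists (x ^+ (n - m) * w * v); apply: monomial_unit_dvd.
by right; exists (x ^+ (m - n) * u * z); apply: monomial_unit_dvd.
Qed.

Lemma monomial_unit_PID : PID D.
Proof.
split => // I [I0 _ IM].
have IX n u v d : u * v = 1 -> d = x ^+ n * u -> I d -> I (x ^+ n).
  by move=> uv Ed Id; rewrite -[x ^+ n]mulr1 -uv mulrA -Ed mulrC; apply: IM.
have [[n In]|noX] := pselect (exists n, I (x ^+ n)); last first.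
  exists 0 => d; split; last by move=> [r ->]; rewrite mulr0.
  move=> Id; exists 0; rewrite mulr0.
  have [//|[n [u [v [uv Ed]]]]] := monomial_unitP d.
  by exfalso; apply: noX; exists n; apply: IX uv Ed Id.
have exP : exists n, `[< I (x ^+ n) >] by exists n; apply/asboolP.
case: (ex_minnP exP) => m /asboolP Im m_min.
exists (x ^+ m) => d; split; last by move=> [r ->]; apply: IM.
move=> Id; have [->|[k [u [v [uv Ed]]]]] := monomial_unitP d.
  by exists 0; rewrite mul0r.
have mk : (m <= k)%N by apply/m_min/asboolP/(IX _ _ _ _ uv Ed Id).
by exists (x ^+ (k - m) * u); rewrite Ed -{1}(subnK mk) exprD mulrAC.
Qed.

End MonomialUnits.

Lemma poly_domain (D : comNzRingType) : is_domain D -> is_domain {poly D}.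
Proof.
move=> hD f g fg0; apply: contrapT => /not_orP[/eqP f0 /eqP g0].
have lfg : lead_coef f * lead_coef g != 0.
  by apply/eqP => /hD[] /eqP; rewrite lead_coef_eq0 ?(negPf f0) ?(negPf g0).
move: (lead_coef_proper_mul lfg); rewrite fg0 lead_coef0 => /eqP.
by rewrite eq_sym (negPf lfg).
Qed.

Lemma in_AE (R : comNzRingType) (a : {poly R}) : in_A a = (a`_0 = 1).
Proof. by rewrite /in_A horner_coef0. Qed.

Lemma in_A1 (R : comNzRingType) : in_A (1 : {poly R}).
Proof. by rewrite /in_A hornerC. Qed.

Lemma in_AM (R : comNzRingType) (a b : {poly R}) : in_A a -> in_A b -> in_A (a * b).
Proof. by rewrite /in_A hornerM => -> ->; rewrite mulr1. Qed.

Section PolyIdeal.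
Variables (R : comNzRingType) (p : R -> Prop).

Definition poly_ideal (f : {poly R}) : Prop := forall i, p f`_i.

Lemma poly_ideal_prime : prime_ideal p -> prime_ideal poly_ideal.
Proof.
move=> pP; have [hp np1 _] := pP.
pose rho : {rmorphism {poly R} -> {poly quot_ring hp np1}} := map_poly (quot_pi hp np1).
have -> : poly_ideal = fun f => rho f = 0.
  apply/funext => f; apply/propext; rewrite -polyP; split => pf i;
    by have := pf i; rewrite coef_map coef0 /= quot_pi_ker.
apply/kernel_prime/poly_domain/(residue_domain pP); [exact: quot_pi_surj | exact: quot_pi_ker].
Qed.

Lemma poly_ideal_notin_A a : ~ p 1 -> in_A a -> ~ poly_ideal a.
Proof. by rewrite in_AE => np1 a0 /(_ 0%N); rewrite a0. Qed.

End PolyIdeal.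

Section Localization.
Variables (R S : comNzRingType) (phi : {rmorphism {poly R} -> S}).
Hypothesis hS : is_localization_A phi.

Section Residue.
Variables (D : comNzRingType) (pi : {rmorphism S -> D}).
Hypothesis pi_surj : forall d, exists t, pi t = d.

Lemma residue_A_unit a : in_A a -> exists z, pi (phi a) * z = 1.
Proof.
by case: hS => hA _ _ /hA[y ay]; exists (pi y); rewrite -rmorphM ay rmorph1.
Qed.

Lemma residue_frac d : exists f b, in_A b /\ d * pi (phi b) = pi (phi f).
Proof.
have [t <-] := pi_surj d; have [_ hfrac _] := hS; have [f [b [bA E]]] := hfrac t.
by exists f, b; split => //; rewrite -rmorphM E.
Qed.

Section ZeroDimensional.
Hypotheses (hz : zero_dimensional R) (hD : is_domain D).

Lemma residue_const_unit c : pi (phi c%:P) != 0 ->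
  exists s, pi (phi s%:P) * pi (phi c%:P) = 1.
Proof.
move=> c0; have [/= |t] := zero_dimensional_comaximal (r := c) hz
  (kernel_prime (pi \o phi \o polyC) hD); first exact/eqP.
rewrite /= polyCB polyCM !(rmorphB, rmorphM, rmorph1) => /eqP.
by rewrite subr_eq0 => /eqP tc; exists t.
Qed.

Lemma residue_unit_const f c : pi (phi c%:P) != 0 ->
  exists z, pi (phi (f * 'X + c%:P)) * z = 1.
Proof.
move=> /residue_const_unit[s sc].
pose g := s%:P * (f * 'X + c%:P) + (1 - s * c)%:P.
have gA : in_A g by rewrite /in_A /g !hornerE /=; ring.
have Eg : pi (phi g) = pi (phi s%:P) * pi (phi (f * 'X + c%:P)).
  by rewrite /g polyCB polyCM !(rmorphD, rmorphN, rmorphM, rmorph1) sc subrr addr0.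
have [z gz] := residue_A_unit gA.
by exists (pi (phi s%:P) * z); rewrite mulrA [_ * pi (phi s%:P)]mulrC -Eg.
Qed.

Lemma residue_poly_monomial_unit f :
  pi (phi f) = 0 \/ monomial_unit (pi (phi 'X)) (pi (phi f)).
Proof.
elim/poly_ind: f => [|f c IH]; first by left; rewrite !rmorph0.
have [c0|/(residue_unit_const f)[z fz]] := eqVneq (pi (phi c%:P)) 0; last first.
  by right; exists 0%N, (pi (phi (f * 'X + c%:P))), z; rewrite expr0 mul1r.
rewrite !rmorphD c0 addr0 !rmorphM.
case: IH => [->|[n [u [v [uv ->]]]]]; first by left; rewrite mul0r.
by right; exists n.+1, u, v; split => //; rewrite exprSr mulrAC.
Qed.

Lemma residue_monomial_unit d : d = 0 \/ monomial_unit (pi (phi 'X)) d.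
Proof.
have [f [b [bA E]]] := residue_frac d; have [z bz] := residue_A_unit bA.
have -> : d = pi (phi f) * z by rewrite -E -mulrA bz mulr1.
have [->|[n [u [v [uv ->]]]]] := residue_poly_monomial_unit f.
  by left; rewrite mul0r.
right; exists n, (u * z), (v * pi (phi b)); split; last by rewrite mulrA.
by rewrite mulrACA uv mul1r mulrC.
Qed.

End ZeroDimensional.
End Residue.

Section ExtendedPrime.
Variables (p : R -> Prop) (pP : prime_ideal p).

Definition loc_ideal (s : S) : Prop :=
  exists f a, [/\ in_A a, s * phi a = phi f & poly_ideal p f].

Lemma loc_ideal_phi h : loc_ideal (phi h) -> poly_ideal p h.
Proof.
have [[_ _ pXM] _ pXP] := poly_ideal_prime pP; have [_ np1 _] := pP.
move=> [f [a [aA Ea pf]]]; have [_ _ hker] := hS.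
have [e [eA eE]] : exists e, in_A e /\ e * (h * a - f) = 0.
  by apply: hker; rewrite rmorphB rmorphM Ea subrr.
have : poly_ideal p (e * a * h).
  have -> : e * a * h = e * f by apply/eqP; rewrite -subr_eq0 -eE; apply/eqP; ring.
  exact: pXM.
have notin_A := poly_ideal_notin_A np1.
by case/pXP => [/pXP[]|//]; [move/(notin_A _ eA) | move/(notin_A _ aA)].
Qed.

Lemma loc_ideal_prime : prime_ideal loc_ideal.
Proof.
have [[pX0 pXD pXM] _ pXP] := poly_ideal_prime pP; have [_ np1 _] := pP.
have [_ hfrac _] := hS.
split; [split| |].
- by exists 0, 1; split; [exact: in_A1 | rewrite !rmorph0 mul0r | exact: pX0].
- move=> s t [f [a [aA Ea pf]]] [g [b [bA Eb pg]]].
  exists (f * b + g * a), (a * b); split; first exact: in_AM.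
    by rewrite rmorphD !rmorphM -Ea -Eb; ring.
  by apply: pXD; rewrite mulrC; apply: pXM.
- move=> r s [f [a [aA Ea pf]]]; have [h [c [cA Ec]]] := hfrac r.
  exists (h * f), (c * a); split; first exact: in_AM.
    by rewrite !rmorphM -Ec -Ea; ring.
  exact: pXM.
- by rewrite -(rmorph1 phi) => /loc_ideal_phi; apply: poly_ideal_notin_A (in_A1 R).
- move=> s t [h [c [cA Ec ph]]].
  have [f [a [aA Ea]]] := hfrac s; have [g [b [bA Eb]]] := hfrac t.
  have : loc_ideal (phi (f * g)).
    exists (h * (a * b)), c; split => //; last by rewrite mulrC; apply: pXM.
    by rewrite !rmorphM -Ea -Eb -Ec; ring.
  by case/loc_ideal_phi/pXP => [pf|pg]; [left; exists f, a | right; exists g, b].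
Qed.

End ExtendedPrime.

Section NotPrufer.
Variables (p q : R -> Prop) (pP : prime_ideal p) (qP : prime_ideal q).
Hypothesis pq : forall r, p r -> q r.
Variables (a : R) (qa : q a) (npa : ~ p a).

Lemma poly_pair_relations_absurd f1 f2 f3 f4 b1 b2 b3 b4 :
    [/\ in_A b1, in_A b2, in_A b3 & in_A b4] ->
    poly_ideal p ('X * f1 * b3 - a%:P * f3 * b1) ->
    poly_ideal p (a%:P * f2 * b4 - 'X * f4 * b2) ->
    poly_ideal p (f1 * b2 + f2 * b1 - b1 * b2) ->
  False.
Proof.
have [_ _ pp] := pP; have [hq nq1 _] := qP; have [_ qD qM] := hq.
rewrite !in_AE => -[b10 b20 b30 b40] /(_ 1%N) h1 /(_ 0%N) h2 /(_ 0%N) h3.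
move: h1; rewrite coefB -!mulrA coefXM coefCM /= coef0M b30 mulr1 => h1.
move: h2; rewrite coefB -!mulrA coefXM coefCM /= coef0M b40 mulr1 subr0 => h2.
move: h3; rewrite coefB coefD !coef0M b10 b20 !mulr1 => h3.
have pf2 : p f2`_0 by case: (pp _ _ h2).
apply: nq1; have -> : 1 = (f1`_0 - a * (f3 * b1)`_1) + a * (f3 * b1)`_1 + f2`_0
    - (f1`_0 + f2`_0 - 1) by ring.
apply: (ideal_sub hq); last exact: pq.
by apply: (qD); [apply: (qD); [exact: pq | rewrite mulrC; exact: qM] | exact: pq].
Qed.

Variables (D : comNzRingType) (pi : {rmorphism S -> D}).
Hypothesis pi_surj : forall d, exists t, pi t = d.
Hypothesis pi_ker : forall t, pi t = 0 <-> loc_ideal p t.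

Lemma residue_kernel f : pi (phi f) = 0 -> poly_ideal p f.
Proof. by move=> /pi_ker; apply: loc_ideal_phi. Qed.

Lemma residue_not_prufer : ~ prufer_domain D.
Proof.
move=> [hD hpr]; set A' := pi (phi a%:P); set X' := pi (phi 'X).
have X'0 : X' != 0.
  by apply/eqP => /residue_kernel /(_ 1%N); rewrite coefX eqxx; case: pP.
have fg : fg_ideal (pair_ideal A' X').
  by exists 2%N, (fun i : 'I_2 => [:: A'; X']`_i).
have nz : exists y, pair_ideal A' X' y /\ y != 0.
  by exists X'; split => //; apply/pair_idealP; exists 0, 1; rewrite mul0r mul1r add0r.
have [al [be [ga [de [e1 e2 e3]]]]] :=
  invertible_pair_ideal hD (hpr _ (gen_by_ideal _) fg nz).
have [f1 [b1 [b1A F1]]] := residue_frac pi_surj al.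
have [f2 [b2 [b2A F2]]] := residue_frac pi_surj be.
have [f3 [b3 [b3A F3]]] := residue_frac pi_surj ga.
have [f4 [b4 [b4A F4]]] := residue_frac pi_surj de.
have c1 : poly_ideal p ('X * f1 * b3 - a%:P * f3 * b1).
  apply: residue_kernel; rewrite !(rmorphB, rmorphM) -/A' -/X' -F1 -F3.
  by transitivity ((X' * al - A' * ga) * pi (phi b1) * pi (phi b3));
    [ring | rewrite e2 subrr !mul0r].
have c2 : poly_ideal p (a%:P * f2 * b4 - 'X * f4 * b2).
  apply: residue_kernel; rewrite !(rmorphB, rmorphM) -/A' -/X' -F2 -F4.
  by transitivity ((A' * be - X' * de) * pi (phi b2) * pi (phi b4));
    [ring | rewrite e3 subrr !mul0r].
have c3 : poly_ideal p (f1 * b2 + f2 * b1 - b1 * b2).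
  apply: residue_kernel; rewrite !(rmorphB, rmorphD, rmorphM) -F1 -F2.
  by transitivity ((al + be - 1) * pi (phi b1) * pi (phi b2));
    [ring | rewrite e1 subrr !mul0r].
exact: (poly_pair_relations_absurd (And4 b1A b2A b3A b4A) c1 c2 c3).
Qed.

End NotPrufer.
End Localization.

Lemma zero_dimensional_residually (R S : comNzRingType)
    (phi : {rmorphism {poly R} -> S}) (Q : comNzRingType -> Prop) :
    is_localization_A phi ->
    (forall (D : comNzRingType) (x : D), is_domain D ->
      (forall d, d = 0 \/ monomial_unit x d) -> Q D) ->
  zero_dimensional R -> residually Q S.
Proof.
move=> hS HQ hz P PP D pi pi_surj pi_ker.
have hD := residue_domain PP pi_surj pi_ker.
exact: HQ hD (residue_monomial_unit hS pi_surj hz hD).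
Qed.

Lemma residually_prufer_zero_dimensional (R S : comNzRingType)
    (phi : {rmorphism {poly R} -> S}) :
  is_localization_A phi -> residually prufer_domain S -> zero_dimensional R.
Proof.
move=> hS hres; split.
  have hI : is_ideal (fun x : R => x = 0).
    by split=> [|x y -> ->|b x ->]; rewrite ?addr0 ?mulr0.
  have [p [pP _]] := exists_prime_over hI (elimN eqP (oner_neq0 R)).
  by exists p.
move=> [p [q [pP [qP [pq [a [qa npa]]]]]]].
have PP := loc_ideal_prime hS pP; have [hP nP1 _] := PP.
have [pi_surj pi_ker] := (@quot_pi_surj _ _ hP nP1, @quot_pi_ker _ _ hP nP1).
apply: (residue_not_prufer hS pP qP pq qa npa pi_surj pi_ker).
exact: hres PP _ _ pi_surj pi_ker.
Qed.

Theorem mainTheorem2 (R S : comNzRingType) (phi : {rmorphism {poly R} -> S})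
    (hS : is_localization_A phi) :
  [<-> residually PID S;
       residually valuation_domain S;
       residually bezout_domain S;
       residually prufer_domain S;
       zero_dimensional R].
Proof.
have to_PID := zero_dimensional_residually hS (@monomial_unit_PID).
have to_valuation := zero_dimensional_residually hS (@monomial_unit_valuation).
have PID_bez := residually_impl (@PID_bezout) (T := S).
have bez_prufer := residually_impl (@bezout_prufer) (T := S).
have prufer_zd := residually_prufer_zero_dimensional hS.
split; first by move=> /PID_bez/bez_prufer/prufer_zd/to_valuation.
split; first exact: residually_impl (@valuation_bezout).
split; first exact: bez_prufer.
by split; [exact: prufer_zd | exact: to_PID].
Qed.
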